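(* If $n\ge 3t+1$, then the protocol COOL (core protocol run by all $n$ processors, as described in the context) satisfies termination, consistency and validity in every execution, i.e. it is an error-free Byzantine agreement protocol.
   Context: Setting. $n$ processors indexed by $[1:n]$, pairwise joined by reliable private synchronous channels; recipients know senders. At most $t$ processors are dishonest, controlled by a Byzantine adversary of unbounded computational power knowing all inputs, who may make them deviate arbitrarily (missing values are replaced by a fixed default); the others are honest. Processor $i$ holds an $\ell$-bit initial message $\boldsymbol w_i$. $\phi$ is a default value different from every $\ell$-bit message. Logarithms are base 2. Requirements: termination (every honest processor eventually outputs and terminates), consistency (all honest outputs equal), validity (if all honest processors have the same initial message, they output it). Code. $k=\lfloor t/5\rfloor+1$, $c=\lceil \max\{\ell,(t/5+1)\log(n+1)\}/k\rceil$. Messages are zero-padded to $kc$ bits and viewed in $GF(2^c)^k$. Integers in $[1:n]$ are identified with distinct nonzero elements of $GF(2^c)$; $\boldsymbol h_i\in GF(2^c)^k$ has entries $h_{i,j}=\prod_{p\in[1:k],\,p\ne j}\frac{i-p}{j-p}$ (field arithmetic). COOL (honest processor $i$). Initialization: updated message $\boldsymbol w^{(i)}:=\boldsymbol w_i$, $y^{(i)}_j:=\boldsymbol h_j^{\mathsf T}\boldsymbol w_i$ for $j\in[1:n]$, $u_i(i):=1$. Phase 1. (a) Send $(y^{(i)}_j,y^{(i)}_i)$ to each $j\ne i$. (b) For $j\ne i$, link indicator $u_i(j):=1$ if the pair received from $j$ equals $(y^{(i)}_i,y^{(i)}_j)$, else $0$. Success indicator $s_i:=1$ if $\sum_{j=1}^n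 u_i(j)\ge n-t$; otherwise $s_i:=0$ and $\boldsymbol w^{(i)}:=\phi$. (c) Send $s_i$ to all; each processor records the indicator received from each $j$ (own for itself) and forms $\mathcal S_1=\{j:s_j=1\}$, $\mathcal S_0=\{j:s_j=0\}$ (views may differ). Phase 2. If $s_i=1$: set $u_i(j):=0$ for all $j\in\mathcal S_0$; if now $\sum_j u_i(j)<n-t$, set $s_i:=0$, $\boldsymbol w^{(i)}:=\phi$, and send $s_i=0$ to all. Everyone overwrites recorded indicators with newly received ones and recomputes $\mathcal S_0,\mathcal S_1$. Phase 3. Repeat Phase 2 once more. Vote $v_i:=1$ if the recorded indicators satisfy $\sum_j s_j\ge 2t+1$, else $0$. Run on the votes a deterministic error-free binary Byzantine agreement protocol for $t<n/3$ (e.g. Berman–Garay–Perry or Coan–Welch), which guarantees all honest processors decide, decide equally, and decide the common honest vote when all honest votes agree. If the decision is $0$: set $\boldsymbol w^{(i)}:=\phi$, output $\phi$, stop. Phase 4 (decision 1). If $s_i=0$: replace $y^{(i)}_i$ by the most frequent value (fixed tie-breaking) among the first components of the Phase-1 pairs received from $j\in\mathcal S_1$; send it to each $j\in\mathcal S_0\setminus\{i\}$; with $z_i=y^{(i)}_i$, $z_j$ = value received from $j$ in Phase 4 for $j\in\mathcal S_0\setminus\{i\}$, $z_j$ = second component of the Phase-1 pair from $j$ for $j\in\mathcal S_1$, set $\boldsymbol w^{(i)}$ to a message $\boldsymbol x$ with $\boldsymbol h_j^{\mathsf T}\boldsymbol x=z_j$ for at least $n-t$ indices $j$ ($\phi$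 if none). If $s_i=1$ keep $\boldsymbol w^{(i)}$. Output $\boldsymbol w^{(i)}$ and stop. *)

(* Processors are indexed by 'I_n
   (0-based: processor i : 'I_n is the paper's processor i+1). *)
From HB Require Import structures.
From mathcomp Require Import all_boot all_algebra.
Import GRing.Theory.

Definition cool_k (t : nat) : nat := (t %/ 5).+1.

(* c = ceil( max{l, (t/5+1) log2(n+1)} / k ), with t/5 real division.
   Equivalently c is the least natural number with
     l <= c*k   and   (t/5+1) log2(n+1) <= c*k,
   and the second condition is equivalent (multiply by 5, exponentiate
   base 2) to (n+1)^(t+5) <= 2^(5ck). *)
Definition cool_c_ok (n t l c : nat) : bool :=
  (l <= c * cool_k t) && ((n.+1) ^ (t + 5) <= 2 ^ (5 * c * cool_k t)).
Definition is_cool_c (n t l c : nat) : Prop :=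
  cool_c_ok n t l c /\ forall c', cool_c_ok n t l c' -> c <= c'.

(* The adversary: all messages sent by dishonest processors.
   Phase 1a pairs, Phase 1c indicators, Phase 2 and Phase 3 indicator
   updates (None = nothing sent), Phase 4 values.  Argument order:
   sender, then receiver.  (Missing values replaced by a fixed default
   are just particular choices.) *)
Record adversary (F : Type) (n : nat) := Adversary {
  adv1  : 'I_n -> 'I_n -> F * F;
  adv1s : 'I_n -> 'I_n -> bool;
  adv2  : 'I_n -> 'I_n -> option bool;
  adv3  : 'I_n -> 'I_n -> option bool;
  adv4  : 'I_n -> 'I_n -> F
}.

Section COOL.
Context (F : finFieldType) (n t l c : nat).
(* identification of the integers with distinct nonzero field elements;
   integer p (0-based) is alpha p *)
Context (alpha : nat -> F).
(* identification of c-bit strings with GF(2^c) *)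
Context (toF : {ffun 'I_c -> bool} -> F).

Local Notation k := (cool_k t).
Local Notation vec := {ffun 'I_(cool_k t) -> F}.

Definition cool_h (i : 'I_n) (j : 'I_k) : F :=
  (\prod_(p < k | p != j) ((alpha i - alpha p) / (alpha j - alpha p)))%R.

Definition cool_code (x : vec) (i : 'I_n) : F :=
  (\sum_(q < k) cool_h i q * x q)%R.

(* an l-bit message zero-padded to kc bits and cut into k blocks of c bits *)
Definition cool_enc (w : l.-tuple bool) : vec :=
  [ffun q : 'I_k => toF [ffun b : 'I_c => nth false w (q * c + b)]].

(* Specification of the Phase-4 decoding step: returns some x agreeing with
   z on at least n-t indices, or phi (= None) if there is none. *)
Definition cool_dec_spec (dec : ('I_n -> F) -> option vec) : Prop :=
  forall z : 'I_n -> F,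
    match dec z return Prop with
    | Some x => (n - t <= #|[set j | cool_code x j == z j]|)%N
    | None => forall x : vec, (#|[set j | cool_code x j == z j]| < n - t)%N
    end.

(* most frequent value of a sequence, fixed tie-breaking *)
Definition cool_mode (s : seq F) : F :=
  [arg max_(y > (0%R : F)) count (pred1 y) s].

Context (dec : ('I_n -> F) -> option vec).
Context (H : {set 'I_n}) (w : 'I_n -> l.-tuple bool) (A : adversary F n).

Definition cnt (u : 'I_n -> bool) : nat := #|[set j | u j]|.

Definition y (i j : 'I_n) : F := cool_code (cool_enc (w i)) j.

Definition m1 (j i : 'I_n) : F * F :=
  if j \in H then (y j i, y j j) else @adv1 F n A j i.
Definition u1 (i j : 'I_n) : bool := (j == i) || (m1 j i == (y i i, y i j)).
Definition s1 (i : 'I_n) : bool := n - t <= cnt (u1 i).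
Definition rec1 (i j : 'I_n) : bool := if j \in H then s1 j else @adv1s F n A j i.

Definition u2 (i j : 'I_n) : bool := u1 i j && rec1 i j.
Definition s2 (i : 'I_n) : bool := s1 i && (n - t <= cnt (u2 i)).
Definition m2 (j i : 'I_n) : option bool :=
  if j \in H then (if s1 j && ~~ s2 j then Some false else None) else @adv2 F n A j i.
Definition rec2 (i j : 'I_n) : bool :=
  if m2 j i is Some b then b else rec1 i j.

Definition u3 (i j : 'I_n) : bool := u2 i j && rec2 i j.
Definition s3 (i : 'I_n) : bool := s2 i && (n - t <= cnt (u3 i)).
Definition m3 (j i : 'I_n) : option bool :=
  if j \in H then (if s2 j && ~~ s3 j then Some false else None) else @adv3 F n A j i.
Definition rec3 (i j : 'I_n) : bool :=
  if m3 j i is Some b then b else rec2 i j.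
Definition vote (i : 'I_n) : bool := 2 * t + 1 <= cnt (rec3 i).

Definition maj (i : 'I_n) : F :=
  cool_mode [seq (m1 j i).1 | j <- enum 'I_n & rec3 i j].
(* value received by i from j in Phase 4 (default 0 if nothing sent) *)
Definition m4 (j i : 'I_n) : F :=
  if j \in H then
    (if ~~ s3 j && ~~ rec3 j i && (i != j) then maj j else 0%R)
  else @adv4 F n A j i.
Definition z (i j : 'I_n) : F :=
  if j == i then maj i else if rec3 i j then (m1 j i).2 else m4 j i.

(* output of processor i, given the common decision d of the binary BA
   run on the votes; None stands for phi *)
Definition cool_out (d : bool) (i : 'I_n) : option vec :=
  if ~~ d then None else if s3 i then Some (cool_enc (w i)) else dec (z i).

End COOL.

(* Codewords are evaluations of polynomials of degree < k = t/5 + 1, so distinct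
   messages agree in at most k - 1 positions.  An honest processor succeeding in
   Phase 1 is linked to at least n - t - f honest processors whose own symbol lies
   on its codeword (f = number of dishonest processors); for three distinct
   messages these sets overlap pairwise in at most k - 1 processors and cannot fit
   into the n - f honest ones, so at most two messages survive Phase 1.  Phases 2
   and 3 then force an honest processor still succeeding after Phase 3 to be backed
   by n - t - f honest processors holding its own message, and two such disjoint
   groups do not fit either: all honest survivors share one message v.  A vote for
   1 needs 2t + 1 successes, hence more than f honest survivors, which makes the
   Phase 4 majority of every honest processor its symbol of v; the decoder then
   sees at most t wrong symbols and must return v, because two messages agreeing
   on n - 2t >= k positions coincide.  With equal honest inputs every honest link
   succeeds and every honest processor votes 1, which gives validity. *)

From Pilot Require Import Defs.
From mathcomp Require Import all_boot all_algebra.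
From mathcomp Require Import zify ring.
Set Implicit Arguments. Unset Strict Implicit. Unset Printing Implicit Defensive.
Import GRing.Theory.

Section LagrangeInterpolation.
Variables (F : fieldType) (k : nat) (a : 'I_k -> F).
Local Open Scope ring_scope.

Definition lagrange_interp (x : 'I_k -> F) : {poly F} :=
  \sum_(q < k) (x q / \prod_(p < k | p != q) (a q - a p))
                 *: \prod_(p < k | p != q) ('X - (a p)%:P).

Lemma size_lagrange_interp x : (size (lagrange_interp x) <= k)%N.
Proof.
apply: leq_trans (size_sum _ _ _) _; apply/bigmax_leqP => q _.
apply: leq_trans (size_scale_leq _ _) _.
rewrite -big_filter size_prod_XsubC size_filter -sum1_count sum1_card cardC1 card_ord.
by rewrite prednK // (leq_ltn_trans _ (ltn_ord q)).
Qed.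

Lemma horner_lagrange_interp x b :
  (lagrange_interp x).[b] =
    \sum_(q < k) (\prod_(p < k | p != q) ((b - a p) / (a q - a p))) * x q.
Proof.
rewrite horner_sum; apply: eq_bigr => q _.
by rewrite hornerZ horner_prod prodf_div; under eq_bigr do rewrite hornerXsubC; ring.
Qed.

Hypothesis a_inj : injective a.

Lemma lagrange_interp_node x q : (lagrange_interp x).[a q] = x q.
Proof.
have a_neq p : p != q -> a q - a p != 0 by rewrite subr_eq0 (inj_eq a_inj) eq_sym.
rewrite horner_lagrange_interp (bigD1 q) //=.
rewrite [X in X * _]big1 => [|p /a_neq/divff //]; rewrite mul1r.
rewrite big1 ?addr0 // => q' q'q.
by rewrite (bigD1 q) 1?eq_sym //= subrr !mul0r.
Qed.

Lemma lagrange_interp_agree x x' (rs : seq F) :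
  uniq rs -> (k <= size rs)%N ->
  {in rs, forall b, (lagrange_interp x).[b] = (lagrange_interp x').[b]} ->
  x =1 x'.
Proof.
move=> rs_uniq rs_size agree.
have size_diff : (size (lagrange_interp x - lagrange_interp x')%R <= size rs)%N.
  apply: leq_trans (size_polyD _ _) (leq_trans _ rs_size).
  by rewrite size_polyN geq_max !size_lagrange_interp.
have /eqP : lagrange_interp x - lagrange_interp x' = 0.
  apply: roots_geq_poly_eq0 rs_uniq size_diff.
  by apply/allP => b /agree eq_b; rewrite rootE hornerD hornerN eq_b subrr.
rewrite subr_eq0 => /eqP same q.
by rewrite -(lagrange_interp_node x) -(lagrange_interp_node x') same.
Qed.

End LagrangeInterpolation.

Section CoolCode.
Variables (n t : nat) (F : finFieldType) (alpha : nat -> F).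
Hypothesis k_le_n : cool_k t <= n.
Hypothesis alpha_inj : {in [pred i | i < n] &, injective alpha}.

Lemma cool_codeE x i :
  cool_code F n t alpha x i =
    (lagrange_interp (fun q : 'I_(cool_k t) => alpha q) x).[alpha i]%R.
Proof. by rewrite horner_lagrange_interp. Qed.

Lemma cool_code_agree_eq (x x' : {ffun 'I_(cool_k t) -> F}) (S : {set 'I_n}) :
  cool_k t <= #|S| -> {in S, cool_code F n t alpha x =1 cool_code F n t alpha x'} ->
  x = x'.
Proof.
move=> S_large agree; apply/ffunP.
have ltn_k q : (q < cool_k t -> q < n)%N by move/leq_trans; apply.
apply: (@lagrange_interp_agree _ _ (fun q : 'I_(cool_k t) => alpha q) _ _ _
          [seq alpha p | p : 'I_n <- enum S]).
- by move=> q q' eq_q; apply/val_inj/alpha_inj; rewrite // inE /= ltn_k.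
- rewrite map_inj_in_uniq ?enum_uniq // => p p' _ _ eq_p.
  by apply/val_inj/alpha_inj; rewrite // inE /=.
- by rewrite size_map -cardE.
by move=> _ /mapP [p p_S ->]; rewrite -!cool_codeE agree // -mem_enum.
Qed.

End CoolCode.

Lemma leq_cards3 (T : finType) (U X Y Z : {set T}) :
  X :|: Y :|: Z \subset U ->
  #|X| + #|Y| + #|Z| <= #|U| + #|X :&: Y| + #|X :&: Z| + #|Y :&: Z|.
Proof.
move=> /subset_leq_card XYZ_U.
have := cardsUI X Y; have := cardsUI (X :|: Y) Z.
have := cardsUI (X :&: Z) (Y :&: Z); rewrite -setIUl.
lia.
Qed.

Lemma leq_cardsI (T : finType) (X Y : {set T}) : #|X| + #|Y| <= #|T| + #|X :&: Y|.
Proof. by rewrite -cardsUI leq_add2r max_card. Qed.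

Lemma count_map_filter_enum (T : finType) (U : eqType) (g : T -> U) (P : pred T) v :
  count_mem v [seq g j | j <- enum T & P j] = #|[set j | P j && (g j == v)]|.
Proof.
rewrite count_map count_filter cardsE cardE size_filter enumT.
by apply: eq_count => j /=; rewrite andbC.
Qed.

Lemma cool_mode_plurality (F : finFieldType) (s : seq F) v :
  (forall u, u != v -> count_mem u s < count_mem v s) -> cool_mode F s = v.
Proof.
move=> v_max; rewrite /cool_mode; case: arg_maxnP => // u _ u_max.
apply/eqP; apply: contraT => /v_max v_gt.
by have := leq_trans v_gt (u_max v isT); rewrite ltnn.
Qed.

Section Protocol.
Variables (n t l c : nat) (F : finFieldType) (alpha : nat -> F)
  (toF : {ffun 'I_c -> bool} -> F)
  (H : {set 'I_n}) (w : 'I_n -> l.-tuple bool) (A : adversary F n).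
Hypothesis n_gt_3t : 3 * t + 1 <= n.
Hypothesis alpha_inj : {in [pred i | i < n] &, injective alpha}.
Hypothesis few_dishonest : #|~: H| <= t.

Local Notation k := (cool_k t).
Local Notation vec := {ffun 'I_(cool_k t) -> F}.
Local Notation f := #|~: H|.
Local Notation code := (cool_code F n t alpha).
Local Notation e i := (cool_enc F t l c toF (w i)).
Local Notation y := (y F n t l c alpha toF w).
Local Notation cnt := (cnt n).
Local Notation m1 := (m1 F n t l c alpha toF H w A).
Local Notation u1 := (u1 F n t l c alpha toF H w A).
Local Notation u2 := (u2 F n t l c alpha toF H w A).
Local Notation u3 := (u3 F n t l c alpha toF H w A).
Local Notation s1 := (s1 F n t l c alpha toF H w A).
Local Notation s2 := (s2 F n t l c alpha toF H w A).
Local Notation s3 := (s3 F n t l c alpha toF H w A).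
Local Notation rec1 := (rec1 F n t l c alpha toF H w A).
Local Notation rec2 := (rec2 F n t l c alpha toF H w A).
Local Notation rec3 := (rec3 F n t l c alpha toF H w A).
Local Notation vote := (vote F n t l c alpha toF H w A).
Local Notation maj := (maj F n t l c alpha toF H w A).
Local Notation z := (z F n t l c alpha toF H w A).

Lemma k_le_n : k <= n.
Proof. have := leq_div t 5; rewrite /cool_k; lia. Qed.

Lemma five_k_le_t : 5 * k.-1 <= t.
Proof. have := leq_trunc_div t 5; rewrite /cool_k /=; lia. Qed.

Lemma card_honest : #|H| + f = n.
Proof. by rewrite cardsC card_ord. Qed.

Lemma cnt_le_honest (u : 'I_n -> bool) (S : {set 'I_n}) :
  (forall j, j \in H -> u j -> j \in S) -> cnt u <= #|S| + f.
Proof.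
move=> uS; rewrite /cnt -(cardsID H [set j | u j]) leq_add //.
  by apply/subset_leq_card/subsetP => j; rewrite !inE => /andP [/uS]; apply.
by apply/subset_leq_card/subsetP => j; rewrite !inE => /andP [].
Qed.

Lemma honest_le_cnt (u : 'I_n -> bool) : {in H, forall j, u j} -> #|H| <= cnt u.
Proof. by move=> uH; apply/subset_leq_card/subsetP => j /uH; rewrite inE. Qed.

Lemma m1_honest i j : j \in H -> m1 j i = (y j i, y j j).
Proof. by rewrite /Defs.m1 => ->. Qed.

Lemma s2_s1 i : s2 i -> s1 i.
Proof. by case/andP. Qed.

Lemma s3_s2 i : s3 i -> s2 i.
Proof. by case/andP. Qed.

Lemma rec1_honest i j : j \in H -> rec1 i j = s1 j.
Proof. by rewrite /Defs.rec1 => ->. Qed.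

Lemma rec2_honest i j : j \in H -> rec2 i j = s2 j.
Proof.
move=> jH; rewrite /Defs.rec2 /m2 jH rec1_honest //.
by case: (boolP (s2 j)) => [/s2_s1 -> | _]; case: (s1 j).
Qed.

Lemma rec3_honest i j : j \in H -> rec3 i j = s3 j.
Proof.
move=> jH; rewrite /Defs.rec3 /m3 jH rec2_honest //.
by case: (boolP (s3 j)) => [/s3_s2 -> | _]; case: (s2 j).
Qed.

Definition agree (x : vec) := [set p in H | y p p == code x p].

Definition same_msg (x : vec) := [set j in H | e j == x].

Definition two_msgs (x x' : vec) := forall j, j \in H -> s1 j -> e j = x \/ e j = x'.

Lemma agree_self j : j \in H -> j \in agree (e j).
Proof. by move=> jH; rewrite inE jH eqxx. Qed.

Lemma same_msg_agree x : same_msg x \subset agree x.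
Proof. by apply/subsetP => j; rewrite !inE => /andP [-> /eqP <-]; rewrite eqxx. Qed.

Lemma link_agree i j : i \in H -> j \in H -> u1 i j ->
  j \in agree (e i) /\ i \in agree (e j).
Proof.
move=> iH jH; rewrite /Defs.u1 m1_honest //.
case/orP => [/eqP -> | /eqP [eq_i eq_j]]; first by rewrite agree_self.
by rewrite !inE iH jH eq_j -eq_i !eqxx.
Qed.

Lemma link_same_msg i j : j \in H -> e i = e j -> u1 i j.
Proof. by move=> jH eq_e; rewrite /Defs.u1 m1_honest // /y eq_e eqxx orbT. Qed.

Lemma card_agreeI x x' : x != x' -> #|agree x :&: agree x'| <= k.-1.
Proof.
apply: contraR; rewrite -ltnNge prednK // => S_large.
apply/eqP/(cool_code_agree_eq k_le_n alpha_inj S_large) => p.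
by rewrite !inE => /andP [/andP [_ /eqP <-] /andP [_ /eqP <-]].
Qed.

Lemma s1_card_agree i : i \in H -> s1 i -> n - t <= #|agree (e i)| + f.
Proof.
move=> iH /leq_trans; apply; apply: cnt_le_honest => j jH.
by case/(link_agree iH jH).
Qed.

Lemma s1_two_msgs i i' : i \in H -> i' \in H -> s1 i -> s1 i' -> e i != e i' ->
  two_msgs (e i) (e i').
Proof.
move=> iH i'H s1i s1i' neq_ii' j jH s1j.
case: (eqVneq (e j) (e i)) => [|neq_ji]; first by left.
case: (eqVneq (e j) (e i')) => [|neq_ji']; first by right.
have agree_H x : agree x \subset H by apply/subsetP => p; rewrite inE => /andP [].
have := leq_cards3 (U := H) (X := agree (e i)) (Y := agree (e i')) (Z := agree (e j)).
rewrite !subUset !agree_H => /(_ isT).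
have := card_agreeI neq_ii'; have := card_agreeI neq_ji; have := card_agreeI neq_ji'.
rewrite ![agree (e j) :&: _]setIC.
have := s1_card_agree iH s1i; have := s1_card_agree i'H s1i'; have := s1_card_agree jH s1j.
have := card_honest; have := five_k_le_t; lia.
Qed.

Lemma two_msgsC x x' : two_msgs x x' -> two_msgs x' x.
Proof. by move=> two j jH /(two j jH) [] ->; [right | left]. Qed.

Lemma s2_card_same_msg j x' : j \in H -> s2 j -> j \notin agree x' ->
  two_msgs (e j) x' -> n - t <= #|same_msg (e j)| + f.
Proof.
move=> jH /andP [_ /leq_trans s2j] j_agree two.
apply: s2j; apply: cnt_le_honest => p pH /andP [u1jp]; rewrite rec1_honest // => /(two p pH).
case=> [eq_e | eq_x']; first by rewrite inE pH eq_e eqxx.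
by case: (link_agree jH pH u1jp) => _; rewrite eq_x' (negbTE j_agree).
Qed.

Lemma s3_card_same_msg_s2 i x' : i \in H -> s3 i -> e i != x' -> two_msgs (e i) x' ->
  n - t <= #|same_msg (e i) :&: [set j | s2 j]| + k.-1 + f.
Proof.
move=> iH /andP [_ /leq_trans s3i] neq_x' two.
have := card_agreeI neq_x'.
suff : n - t <= #|(same_msg (e i) :&: [set j | s2 j]) :|: (agree (e i) :&: agree x')| + f.
  by have := cardsUI (same_msg (e i) :&: [set j | s2 j]) (agree (e i) :&: agree x'); lia.
apply: s3i; apply: cnt_le_honest => j jH /andP [/andP [u1ij]].
rewrite rec1_honest // rec2_honest // => /(two j jH) [eq_e | eq_x'] s2j.
  by rewrite !inE jH eq_e eqxx s2j.
case: (link_agree iH jH u1ij) => j_agree _.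
by rewrite in_setU !in_setI j_agree -eq_x' agree_self ?orbT.
Qed.

Lemma s3_card_same_msg i x' : i \in H -> s3 i -> e i != x' -> two_msgs (e i) x' ->
  n - t <= #|same_msg (e i)| + f.
Proof.
move=> iH s3i neq_x' two.
have large := s3_card_same_msg_s2 iH s3i neq_x' two.
have [j] : exists2 j, j \in same_msg (e i) :&: [set j | s2 j] & j \notin agree x'.
  apply/subsetPn; apply: contraTN large => sub; rewrite -ltnNge.
  have : same_msg (e i) :&: [set j | s2 j] \subset agree (e i) :&: agree x'.
    by rewrite subsetI sub (subset_trans (subsetIl _ _) (same_msg_agree _)).
  move/subset_leq_card; have := card_agreeI neq_x'.
  have := five_k_le_t; lia.
case/setIP => /setIdP [jH /eqP eq_e]; rewrite inE => s2j j_agree.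
by rewrite -eq_e (s2_card_same_msg jH s2j j_agree) // eq_e.
Qed.

Lemma card_same_msg2 x x' : x != x' -> #|same_msg x| + #|same_msg x'| <= #|H|.
Proof.
move=> neq_x; rewrite -cardsUI.
have -> : same_msg x :&: same_msg x' = set0.
  apply/setP => j; rewrite !inE.
  by case: (e j =P x) => [-> |]; rewrite ?(negbTE neq_x) ?andbF.
rewrite cards0 addn0 subset_leq_card // subUset.
by apply/andP; split; apply/subsetP => j; rewrite inE => /andP [].
Qed.

Lemma s3_same_msg i i' : i \in H -> i' \in H -> s3 i -> s3 i' -> e i = e i'.
Proof.
move=> iH i'H s3i s3i'; apply/eqP; apply: contraT => neq_e.
have two := s1_two_msgs iH i'H (s2_s1 (s3_s2 s3i)) (s2_s1 (s3_s2 s3i')) neq_e.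
have := s3_card_same_msg iH s3i neq_e two.
have neq_e' : e i' != e i by rewrite eq_sym.
have := s3_card_same_msg i'H s3i' neq_e' (two_msgsC two).
have := card_same_msg2 neq_e; have := card_honest; lia.
Qed.

Variable dec : ('I_n -> F) -> option vec.
Hypothesis dec_spec : cool_dec_spec F n t alpha dec.

Local Notation cool_out := (cool_out F n t l c alpha toF dec H w A).

Lemma vote_card_s3 i : vote i -> f < #|[set p in H | s3 p]|.
Proof.
move=> voted.
have : cnt (rec3 i) <= #|[set p in H | s3 p]| + f.
  by apply: cnt_le_honest => p pH; rewrite rec3_honest // inE pH.
move: voted; rewrite /Defs.vote; lia.
Qed.

Lemma maj_honest j v : (forall p, p \in H -> s3 p -> e p = v) ->
  f < #|[set p in H | s3 p]| -> maj j = code v j.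
Proof.
move=> s3_v many; apply: cool_mode_plurality => u neq_u.
rewrite !count_map_filter_enum.
have le_v : #|[set p in H | s3 p]| <= #|[set p | rec3 j p && ((m1 p j).1 == code v j)]|.
  apply/subset_leq_card/subsetP => p; rewrite !inE => /andP [pH s3p].
  by rewrite rec3_honest // s3p m1_honest //= -(s3_v p) ?eqxx.
have le_u : #|[set p | rec3 j p && ((m1 p j).1 == u)]| <= f.
  apply/subset_leq_card/subsetP => p; rewrite !inE.
  case: (boolP (p \in H)) => //= pH.
  rewrite rec3_honest // m1_honest //= => /andP [s3p /eqP eq_u].
  by move: neq_u; rewrite -eq_u -(s3_v p) ?eqxx.
lia.
Qed.

Lemma z_honest i v : i \in H -> ~~ s3 i -> (forall p, p \in H -> s3 p -> e p = v) ->
  f < #|[set p in H | s3 p]| -> {in H, z i =1 code v}.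
Proof.
move=> iH s3i s3_v many j jH; rewrite /Defs.z.
have maj_v p : maj p = code v p := maj_honest p s3_v many.
case: eqP => [-> | /eqP neq_ji]; first exact: maj_v.
rewrite rec3_honest //; case: (boolP (s3 j)) => s3j.
  by rewrite m1_honest //= -(s3_v j).
by rewrite /m4 jH s3j rec3_honest // (negbTE s3i) eq_sym neq_ji maj_v.
Qed.

Lemma honest_overlap (X : {set 'I_n}) : n - t <= #|X| -> k <= #|X :&: H|.
Proof.
move=> X_large; have := leq_cardsI X H; rewrite card_ord.
move: X_large few_dishonest card_honest five_k_le_t; rewrite /cool_k /=.
(* The cardinals above carry differently elaborated copies of the finType 'I_n,
   which lia would treat as distinct atoms; generalizing them identifies the copies. *)
by move: #|X| #|H| #|X :&: H| #|~: H|; lia.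
Qed.

Lemma dec_honest_codeword (z' : 'I_n -> F) v : {in H, z' =1 code v} -> dec z' = Some v.
Proof.
move=> z'_v.
have := dec_spec z'; case: (dec z') => [x x_large | none]; last first.
  have := none v; rewrite ltnNge => /negP []; apply: leq_trans (_ : #|H| <= _).
    by have := card_honest; lia.
  by apply/subset_leq_card/subsetP => p pH; rewrite inE z'_v.
congr Some; apply: (cool_code_agree_eq k_le_n alpha_inj (honest_overlap x_large)).
by move=> p /setIP []; rewrite inE => /eqP -> /z'_v.
Qed.

Lemma honest_voter d : (forall b, (forall i, i \in H -> vote i = b) -> d = b) ->
  d -> exists2 i, i \in H & vote i.
Proof.
move=> decided d_true; apply/exists_inP; apply: contraTT d_true => /exists_inPn no_vote.
by rewrite (decided false) // => i /no_vote /negbTE.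
Qed.

Lemma cool_consistency d : (forall b, (forall i, i \in H -> vote i = b) -> d = b) ->
  forall i j, i \in H -> j \in H -> cool_out d i = cool_out d j.
Proof.
case: d => decided; last by [].
have [_ _ /vote_card_s3 many] := honest_voter decided isT.
have [i1] : exists i1, i1 \in [set p in H | s3 p].
  by apply/set0Pn; rewrite -card_gt0; lia.
rewrite inE => /andP [i1H s3i1].
have s3_v p : p \in H -> s3 p -> e p = e i1 by move=> pH s3p; apply: s3_same_msg.
suff out_v i : i \in H -> cool_out true i = Some (e i1) by move=> i j /out_v -> /out_v ->.
move=> iH; rewrite /Defs.cool_out /=; case: ifP => [s3i | /negbT s3i].
  by rewrite s3_v.
exact/dec_honest_codeword/(z_honest iH s3i s3_v many).
Qed.

Lemma same_input_s3 w0 : (forall i, i \in H -> w i = w0) -> forall i, i \in H -> s3 i.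
Proof.
move=> same.
have H_large : n - t <= #|H| by have := card_honest; lia.
have link i j : i \in H -> j \in H -> u1 i j.
  by move=> iH jH; apply: link_same_msg; rewrite ?same.
have s1H i : i \in H -> s1 i.
  by move=> iH; apply: leq_trans H_large (honest_le_cnt _) => j; apply: link.
have s2H i : i \in H -> s2 i.
  move=> iH; rewrite /Defs.s2 s1H //=; apply: leq_trans H_large (honest_le_cnt _) => j jH.
  by rewrite /Defs.u2 link // rec1_honest // s1H.
move=> i iH; rewrite /Defs.s3 s2H //=; apply: leq_trans H_large (honest_le_cnt _) => j jH.
by rewrite /Defs.u3 /Defs.u2 link // rec1_honest // rec2_honest // s1H // s2H.
Qed.

Lemma cool_validity d w0 : (forall b, (forall i, i \in H -> vote i = b) -> d = b) ->
  (forall i, i \in H -> w i = w0) ->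
  forall i, i \in H -> cool_out d i = Some (cool_enc F t l c toF w0).
Proof.
move=> decided same.
have s3H := same_input_s3 same.
have -> : d = true.
  apply: decided => i iH; apply: leq_trans (honest_le_cnt _) => [|j jH].
    by have := card_honest; lia.
  by rewrite rec3_honest // s3H.
by move=> i iH; rewrite /Defs.cool_out /= s3H // same.
Qed.

End Protocol.

Theorem lemma2
  (n t l c : nat) (F : finFieldType)
  (alpha : nat -> F) (toF : {ffun 'I_c -> bool} -> F)
  (dec : ('I_n -> F) -> option {ffun 'I_(cool_k t) -> F})
  (Hnt : 3 * t + 1 <= n)
  (Hc : is_cool_c n t l c)
  (HF : #|F| = 2 ^ c)
  (Halpha_inj : {in [pred i | i < n] &, injective alpha})
  (Halpha_nz : forall i, i < n -> alpha i != 0%R)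
  (HtoF : bijective toF)
  (Hdec : cool_dec_spec F n t alpha dec)
  (H : {set 'I_n}) (HH : #|~: H| <= t)
  (w : 'I_n -> l.-tuple bool) (A : adversary F n)
  (d : bool)
  (HBA : forall b : bool,
      (forall i, i \in H -> vote F n t l c alpha toF H w A i = b) -> d = b) :
  (* termination is built in: every honest processor's output is the
     (total) function cool_out; consistency *)
  (forall i j, i \in H -> j \in H ->
     cool_out F n t l c alpha toF dec H w A d i = cool_out F n t l c alpha toF dec H w A d j)
  /\
  (* validity *)
  (forall w0 : l.-tuple bool, (forall i, i \in H -> w i = w0) ->
     forall i, i \in H ->
       cool_out F n t l c alpha toF dec H w A d i = Some (cool_enc F t l c toF w0)).
Proof.
(* Hc, HF, Halpha_nz and HtoF only matter for the communication cost. *)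
split; first exact: (cool_consistency Hnt Halpha_inj HH Hdec HBA).
by move=> w0; apply: (cool_validity Hnt HH dec HBA).
Qed.
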